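(* Let $X\subseteq \mathbb{P}^1\times\mathbb{P}^1\times\mathbb{P}^1$ be a Ferrers variety of lines and $H_X$ the Hilbert function of $R/I_X$. Then, for all $(i,j,k)\in\mathbb N^3$, $$\Delta H_X(i,j,k)=\begin{cases}0 & \text{if } (i,j,k)\succeq (a,b,c) \text{ for some } (a,b,c)\in\hat D(X),\\ 1 & \text{otherwise.}\end{cases}$$
   Context: $R=K[x_{1,0},x_{1,1},x_{2,0},x_{2,1},x_{3,0},x_{3,1}]$ ($K$ algebraically closed, characteristic zero) trigraded by $\deg x_{i,j}=\mathbf e_i$, coordinate ring of $\mathbb{P}^1\times\mathbb{P}^1\times\mathbb{P}^1$. $\preceq$ is the componentwise partial order on $\mathbb N^3$. A variety of lines is $X= \bigcup_{(i,j)\in U_3(X)} \mathcal{L}(A_i,B_j)\cup\bigcup_{(i,k)\in U_2(X)} \mathcal{L}(A_i,C_k)\cup \bigcup_{(j,k)\in U_1(X)} \mathcal{L}(B_j,C_k)$, where $A_1,\ldots,A_{d_1}$, $B_1,\ldots,B_{d_2}$, $C_1,\ldots,C_{d_3}$ are linear forms of degrees $(1,0,0),(0,1,0),(0,0,1)$ defining the distinct hyperplanes containing some line of $X$, $\mathcal L(F,G)$ is the line defined by $(F,G)$, $U_3(X)\subseteq[d_1]\times[d_2]$, $U_2(X)\subseteq[d_1]\times[d_3]$, $U_1(X)\subseteq[d_2]\times[d_3]$. Its ideal is $I_X=\bigcap_{U_3(X)} (A_i,B_j)\cap\bigcap_{U_2(X)} (A_i,C_k)\cap\bigcap_{U_1(X)}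 (B_j,C_k)$. $X$ is a Ferrers variety of lines if, for this labeling, each $U_h(X)$ is downward closed: $(u,v)\in U_h(X)\Rightarrow (u',v')\in U_h(X)$ for all $1\le u'\le u$, $1\le v'\le v$. With $X_h$ the union of the lines indexed by $U_h(X)$, let $D_3(X)$, $D_2(X)$, $D_1(X)$ be the sets of tridegrees of minimal generators of $I_{X_3}$ (of form $(a,b,0)$), $I_{X_2}$ (of form $(a,0,c)$), $I_{X_1}$ (of form $(0,b,c)$); $D(X)=\{(\max\{a_3,a_2\},\max\{b_3,b_1\},\max\{c_1,c_2\}) : (a_3,b_3,0)\in D_3(X),(a_2,0,c_2)\in D_2(X),(0,b_1,c_1)\in D_1(X)\}$ and $\hat D(X)$ its set of minimal elements for $\preceq$. The Hilbert function is $H_X(i,j,k)=\dim_K R_{i,j,k}-\dim_K (I_X)_{i,j,k}$, with $H_X(i,j,k)=0$ if some coordinate is negative, and $\Delta H_X(i,j,k)=\sum_{(0,0,0)\preceq(l,m,n)\preceq(1,1,1)}(-1)^{l+m+n}H_X(i-l,j-m,k-n)$. *)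

From HB Require Import structures.
From mathcomp Require Import all_boot all_algebra.
From mathcomp Require Import mpoly.
From Stdlib Require Import ClassicalEpsilon.

Set Implicit Arguments.
Unset Strict Implicit.
Unset Printing Implicit Defensive.

Import GRing.Theory.
Local Open Scope ring_scope.

Notation tri := (nat * nat * nat)%type.

Definition tle (a b : tri) : bool :=
  [&& (a.1.1 <= b.1.1)%N, (a.1.2 <= b.1.2)%N & (a.2 <= b.2)%N].

Section Defs.
Variable K : fieldType.
Local Notation P := {mpoly K[6]}.

(* R = K[x_{1,0},x_{1,1},x_{2,0},x_{2,1},x_{3,0},x_{3,1}];
   x_{i+1,j} is the variable 'X_(2i+j)  (i : 'I_3, j : 'I_2). *)
Definition xvar (i : 'I_3) (j : 'I_2) : P := 'X_(inord (2 * i + j)).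

Definition mtdeg (m : 'X_{1..6}) : tri :=
  (m (inord 0) + m (inord 1), m (inord 2) + m (inord 3),
   m (inord 4) + m (inord 5))%N.

(* p is trihomogeneous of tridegree d (0 is homogeneous of every degree);
   the set of such p is R_d *)
Definition trihomog (d : tri) (p : P) : Prop :=
  forall m, m \in msupp p -> mtdeg m = d.

Definition lin_form (i : 'I_3) (F : P) : Prop :=
  exists c0 c1 : K, (c0 != 0 \/ c1 != 0) /\
    F = c0 *: xvar i ord0 + c1 *: xvar i ord_max.

Definition in_ideal (s : seq P) (p : P) : Prop :=
  exists c : 'I_(size s) -> P, p = \sum_(k < size s) c k * s`_k.

(* ideal of a union of lines L(F_u, G_v), (u,v) in U :
   intersection of the ideals (F_u, G_v) *)
Definition lines_ideal m n (F : 'I_m -> P) (G : 'I_n -> P)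
  (U : {set 'I_m * 'I_n}) (p : P) : Prop :=
  forall u, u \in U -> in_ideal [:: F u.1; G u.2] p.

(* K-dimension of a K-subspace S of R (0 if infinite dimensional) *)
Definition free_in (S : P -> Prop) n (v : 'I_n -> P) : Prop :=
  (forall i, S (v i)) /\
  (forall c : 'I_n -> K, \sum_(i < n) c i *: v i = 0 -> forall i, c i = 0).
Definition has_free (S : P -> Prop) n : Prop := exists v : 'I_n -> P, free_in S v.
Definition dimK (S : P -> Prop) : nat :=
  match excluded_middle_informative
          (exists n, has_free S n /\ ~ has_free S n.+1) with
  | left H => proj1_sig (constructive_indefinite_description _ H)
  | right _ => 0%N
  end.

Definition hilb (I : P -> Prop) (d : tri) : int :=
  (dimK (trihomog d))%:Z - (dimK (fun p => trihomog d p /\ I p))%:Z.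

(* H extended by 0 at points with a negative coordinate:
   value at (i-l, j-m, k-n) *)
Definition hilb_sh (I : P -> Prop) (d : tri) (l m n : nat) : int :=
  if [&& (l <= d.1.1)%N, (m <= d.1.2)%N & (n <= d.2)%N]
  then hilb I (d.1.1 - l, d.1.2 - m, d.2 - n)%N else 0.

Definition DeltaH (I : P -> Prop) (d : tri) : int :=
  \sum_(l < 2) \sum_(m < 2) \sum_(n < 2)
     (-1) ^+ (l + m + n) * hilb_sh I d l m n.

(* d is the tridegree of a minimal generator of the ideal I: it is the
   tridegree of an element of a minimal (irredundant) system of
   trihomogeneous generators of I *)
Definition min_gen_deg (I : P -> Prop) (d : tri) : Prop :=
  exists s : seq P,
    [/\ forall k : 'I_(size s), exists e, trihomog e s`_k,
        forall p, I p <-> in_ideal s p,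
        forall k : 'I_(size s), ~ in_ideal (take k s ++ drop k.+1 s) s`_k &
        exists k : 'I_(size s), trihomog d s`_k].

End Defs.

Definition DX (D3 D2 D1 : tri -> Prop) (d : tri) : Prop :=
  exists a3 b3 a2 c2 b1 c1,
    [/\ D3 (a3, b3, 0%N), D2 (a2, 0%N, c2), D1 (0%N, b1, c1) &
        d = (maxn a3 a2, maxn b3 b1, maxn c1 c2)].

Definition minimal_elts (D : tri -> Prop) (d : tri) : Prop :=
  D d /\ forall e, D e -> tle e d -> e = d.

Definition down_closed m n (U : {set 'I_m * 'I_n}) : Prop :=
  forall u v : 'I_m * 'I_n,
    u \in U -> (v.1 <= u.1)%N -> (v.2 <= u.2)%N -> v \in U.

(* A_1..A_d1, B_1..B_d2, C_1..C_d3 are linear forms of degrees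
   (1,0,0),(0,1,0),(0,0,1) defining distinct hyperplanes, each containing
   some line of X (indices are 0-based here). *)
Definition var_of_lines (K : fieldType) d1 d2 d3
  (A : 'I_d1 -> {mpoly K[6]}) (B : 'I_d2 -> {mpoly K[6]})
  (C : 'I_d3 -> {mpoly K[6]})
  (U3 : {set 'I_d1 * 'I_d2}) (U2 : {set 'I_d1 * 'I_d3})
  (U1 : {set 'I_d2 * 'I_d3}) : Prop :=
  [/\ (forall i, lin_form 0 (A i)) /\ (forall j, lin_form 1 (B j))
        /\ (forall k, lin_form 2 (C k)),
      (forall i i', i != i' -> ~ exists c : K, A i = c *: A i')
        /\ (forall j j', j != j' -> ~ exists c : K, B j = c *: B j')
        /\ (forall k k', k != k' -> ~ exists c : K, C k = c *: C k') &
      (forall i, (exists j, (i, j) \in U3) \/ (exists k, (i, k) \in U2))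
        /\ (forall j, (exists i, (i, j) \in U3) \/ (exists k, (j, k) \in U1))
        /\ (forall k, (exists i, (i, k) \in U2) \/ (exists j, (j, k) \in U1))].

From HB Require Import structures.
From mathcomp Require Import all_boot all_algebra.
From mathcomp Require Import mpoly.
From mathcomp Require Import ring zify.
From Stdlib Require Import ClassicalEpsilon Classical.

Set Implicit Arguments.
Unset Strict Implicit.
Unset Printing Implicit Defensive.
Import GRing.Theory.
Local Open Scope ring_scope.

(* Pick, in each factor P^1, pairwise distinct points such that the linear
   forms A_i, B_j, C_k vanish at the first ones (in characteristic zero the
   families can be extended to infinitely many points).  Products of linear
   forms through these points give a basis (sep_poly d x), x <= d, of R_d
   which is triangular for evaluation at the grid points: sep_poly d x
   vanishes at the grid point y unless x <= y, and not at x.  An element of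
   I_X vanishes at the grid points lying on X; for a Ferrers configuration
   these form a down-set, so (I_X)_d is spanned by the sep_poly d x with x
   off X.  Hence H_X(d) counts the grid points below d lying on X and
   DeltaH_X(d) is 1 or 0 according as d lies on X or not.  Finally, the ideal
   of the lines indexed by a staircase U is generated by products of linear
   forms attached to the corners of the complement of U, which identifies the
   grid points off X with the tridegrees above some element of hat D(X). *)

Definition tri_add (a b : tri) : tri := (a.1.1 + b.1.1, a.1.2 + b.1.2, a.2 + b.2)%N.

Definition tri_nth (y : tri) (h : nat) : nat :=
  match h with 0 => y.1.1 | 1 => y.1.2 | _ => y.2 end.

Definition tri_axis (h n : nat) : tri :=
  ((if h == 0 then n else 0), (if h == 1 then n else 0), (if h == 2 then n else 0))%N.

Definition tri_weight (x : tri) : nat := (x.1.1 + x.1.2 + x.2)%N.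

Lemma tri_nth_add x y h : tri_nth (tri_add x y) h = (tri_nth x h + tri_nth y h)%N.
Proof. by case: h => [|[|h]]. Qed.

Lemma tri_nth_axis h h' n : (h < 3)%N -> (h' < 3)%N ->
  tri_nth (tri_axis h n) h' = if h == h' then n else 0%N.
Proof. by case: h => [|[|[|]]] //; case: h' => [|[|[|]]]. Qed.

Lemma tri_axis0 h : tri_axis h 0 = (0, 0, 0)%N.
Proof. by rewrite /tri_axis; case: ifP; case: ifP; case: ifP. Qed.

Lemma tri_axisS h n : tri_add (tri_axis h n) (tri_axis h 1) = tri_axis h n.+1.
Proof. by rewrite /tri_axis /tri_add /=; congr (_, _, _); case: ifP => _; lia. Qed.

Lemma tri_add_axes a b c :
  tri_add (tri_add (tri_axis 0 a) (tri_axis 1 b)) (tri_axis 2 c) = (a, b, c).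
Proof. by rewrite /tri_axis /tri_add /= !addn0 !add0n. Qed.

Lemma tleP (x y : tri) :
  reflect (forall h, (h < 3)%N -> (tri_nth x h <= tri_nth y h)%N) (tle x y).
Proof.
apply: (iffP and3P) => [[? ? ?] [|[|[|]]] //|H].
by split; [apply: (H 0%N) | apply: (H 1%N) | apply: (H 2%N)].
Qed.

Lemma tle_nth (x y : tri) h : tle x y -> (tri_nth x h <= tri_nth y h)%N.
Proof. by case/and3P => ? ? ?; case: h => [|[|h]]. Qed.

Lemma tle_refl (x : tri) : tle x x.
Proof. by rewrite /tle !leqnn. Qed.

Lemma tle_trans (x y z : tri) : tle x y -> tle y z -> tle x z.
Proof. by move=> /and3P [? ? ?] /and3P [? ? ?]; apply/and3P; split; lia. Qed.

Lemma tle_addl (x e : tri) : tle e (tri_add x e).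
Proof. by rewrite /tle /tri_add /= !leq_addl. Qed.

Lemma tri_weight_lt (x y : tri) : tle x y -> x != y -> (tri_weight x < tri_weight y)%N.
Proof.
case: x y => [[a b] c] [[a' b'] c'] /and3P /= [? ? ?] ne.
suff : ~ (a = a' /\ b = b' /\ c = c') by rewrite /tri_weight /=; lia.
by move=> [ea [eb ec]]; move: ne; rewrite ea eb ec eqxx.
Qed.

Lemma minimal_elts_below (D : tri -> Prop) e0 :
  D e0 -> exists e, minimal_elts D e /\ tle e e0.
Proof.
have [n] := ubnP (tri_weight e0); elim: n e0 => // n IH e0 /ltnSE hw De0.
have [[e [De le ne]]|none] := classic (exists e, [/\ D e, tle e e0 & e <> e0]).
  have [|e' [min_e' le']] := IH e _ De.
    by apply: leq_trans hw; apply: tri_weight_lt => //; apply/eqP.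
  by exists e'; split => //; apply: tle_trans le' le.
exists e0; split; last exact: tle_refl.
by split=> // e De le; apply: NNPP => ne; apply: none; exists e.
Qed.

Lemma mtdegD (m1 m2 : 'X_{1..6}) : mtdeg (m1 + m2)%MM = tri_add (mtdeg m1) (mtdeg m2).
Proof. by rewrite /mtdeg /tri_add !mnmDE /=; congr (_, _, _); lia. Qed.

Lemma mtdeg0 : mtdeg (0%MM : 'X_{1..6}) = (0, 0, 0)%N.
Proof. by rewrite /mtdeg !mnm0E. Qed.

Lemma mtdegU h j : (h < 3)%N -> (j < 2)%N ->
  mtdeg (U_(inord (2 * h + j)) : 'X_{1..6})%MM = tri_axis h 1.
Proof.
move=> hh hj; rewrite /mtdeg /tri_axis !mnm1E -!val_eqE /= !inordK; try lia.
by case: h hh => [|[|[|h]]] // _; case: j hj => [|[|j]].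
Qed.

(* The monomials of tridegree d are x_{1,0}^a x_{1,1}^(d1-a) x_{2,0}^b x_{2,1}^(d2-b)
   x_{3,0}^c x_{3,1}^(d3-c), indexed by the box [0,d1] x [0,d2] x [0,d3]. *)
Notation box d := ('I_(d.1.1).+1 * 'I_(d.1.2).+1 * 'I_(d.2).+1)%type.

Definition box_tri d (x : box d) : tri := (x.1.1 : nat, x.1.2 : nat, x.2 : nat).

Definition box_mnm d (x : box d) : 'X_{1..6} :=
  [multinom (nth 0%N [:: (x.1.1 : nat); (d.1.1 - x.1.1)%N; (x.1.2 : nat);
       (d.1.2 - x.1.2)%N; (x.2 : nat); (d.2 - x.2)%N] i) | i < 6].

Lemma box_tri_inj d : injective (@box_tri d).
Proof.
move=> [[a b] c] [[a' b'] c'] [ha hb hc].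
by rewrite (ord_inj ha) (ord_inj hb) (ord_inj hc).
Qed.

Lemma box_tri_le d (x : box d) : tle (box_tri x) d.
Proof. by apply/and3P; split; rewrite /= -ltnS ltn_ord. Qed.

Lemma mtdeg_box_mnm d (m : 'X_{1..6}) : mtdeg m = d -> exists x : box d, m = box_mnm x.
Proof.
move=> <-; rewrite /mtdeg /=.
have h0 : (m (inord 0) < (m (inord 0) + m (inord 1)).+1)%N by lia.
have h2 : (m (inord 2) < (m (inord 2) + m (inord 3)).+1)%N by lia.
have h4 : (m (inord 4) < (m (inord 4) + m (inord 5)).+1)%N by lia.
exists (Ordinal h0, Ordinal h2, Ordinal h4); apply/mnmP => i; rewrite mnmE /=.
have -> : i = inord i by rewrite inord_val.
by case: i => [[|[|[|[|[|[|i]]]]]] hi] //=; rewrite !inordK //=; lia.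
Qed.

Section Trihomogeneous.
Variable K : fieldType.
Local Notation P := {mpoly K[6]}.

Lemma trihomog0 d : trihomog d (0 : P).
Proof. by move=> m; rewrite msupp0. Qed.

Lemma trihomogD d (p q : P) : trihomog d p -> trihomog d q -> trihomog d (p + q).
Proof. by move=> hp hq m /msuppD_le; rewrite mem_cat => /orP [/hp|/hq]. Qed.

Lemma trihomogZ d c (p : P) : trihomog d p -> trihomog d (c *: p).
Proof. by move=> hp m /msuppZ_le /hp. Qed.

Lemma trihomogB d (p q : P) : trihomog d p -> trihomog d q -> trihomog d (p - q).
Proof. by move=> hp hq; apply: trihomogD => // m; rewrite (perm_mem (msuppN q)) => /hq. Qed.

Lemma trihomogM d e (p q : P) :
  trihomog d p -> trihomog e q -> trihomog (tri_add d e) (p * q).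
Proof.
move=> hp hq m /msuppM_le /allpairsP [[m1 m2] /= [h1 h2 ->]].
by rewrite mtdegD (hp _ h1) (hq _ h2).
Qed.

Lemma trihomog1 : trihomog (0, 0, 0)%N (1 : P).
Proof. by move=> m; rewrite msupp1 inE => /eqP ->; rewrite mtdeg0. Qed.

Lemma trihomogX (m : 'X_{1..6}) : trihomog (mtdeg m) ('X_[m] : P).
Proof. by move=> m'; rewrite msuppX inE => /eqP ->. Qed.

Definition tricomp (d : tri) (p : P) : P :=
  \sum_(m <- msupp p | mtdeg m == d) p@_m *: 'X_[m].

Lemma mcoeff_tricomp d p m : (tricomp d p)@_m = if mtdeg m == d then p@_m else 0.
Proof.
rewrite /tricomp raddf_sum /=.
under eq_bigr do rewrite mcoeffZ mcoeffX (fun_if (fun b => _ * b%:R)) mulr1 mulr0.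
rewrite big_mkcond /=.
have [mp|mp] := boolP (m \in msupp p).
  rewrite (bigD1_seq m) ?msupp_uniq //= eqxx big1 ?addr0 => [|m' /negbTE ->];
    by case: ifP.
rewrite big1_seq => [|m' /andP [_ m'p]].
  by move: mp; rewrite -mcoeff_eq0 => /eqP ->; case: ifP.
by case: (m' =P m) mp => [<-|]; rewrite ?m'p; case: ifP.
Qed.

Fact tricomp_is_linear d : linear (tricomp d).
Proof.
move=> c p q; apply/mpolyP => m.
by rewrite mcoeffD mcoeffZ !mcoeff_tricomp mcoeffD mcoeffZ; case: ifP; rewrite ?mulr0 ?addr0.
Qed.

HB.instance Definition _ d :=
  GRing.isLinear.Build K P P *:%R (tricomp d) (tricomp_is_linear d).

Lemma trihomog_tricomp d p : trihomog d (tricomp d p).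
Proof. by move=> m; rewrite mcoeff_msupp mcoeff_tricomp; case: (mtdeg m =P d); rewrite ?eqxx. Qed.

Lemma tricomp_id d p : trihomog d p -> tricomp d p = p.
Proof.
move=> hp; apply/mpolyP => m; rewrite mcoeff_tricomp; case: eqP => // ne.
by apply/esym/eqP; rewrite mcoeff_eq0; apply: contra_notN ne => /hp.
Qed.

Lemma tricomp_eq0 d e p : trihomog e p -> e <> d -> tricomp d p = 0.
Proof.
move=> hp ne; apply/mpolyP => m; rewrite mcoeff_tricomp mcoeff0; case: eqP => // ed.
by apply/eqP; rewrite mcoeff_eq0; apply: contra_notN ne => /hp <-.
Qed.

Lemma sum_tricomp p : p = \sum_(e <- undup (map mtdeg (msupp p))) tricomp e p.
Proof.
apply/mpolyP => m; rewrite raddf_sum /=.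
under eq_bigr do rewrite mcoeff_tricomp.
have [mp|mp] := boolP (m \in msupp p).
  have me : mtdeg m \in undup (map mtdeg (msupp p)) by rewrite mem_undup map_f.
  rewrite (bigD1_seq (mtdeg m)) ?undup_uniq //= eqxx big1 ?addr0 // => e.
  by rewrite eq_sym => /negbTE ->.
by move: mp; rewrite -mcoeff_eq0 => /eqP ->; rewrite big1 // => e _; case: ifP.
Qed.

Lemma tricompM_trihomog d e c (g : P) : trihomog e g ->
  tricomp d (c * g) = (\sum_(m <- msupp c | tri_add (mtdeg m) e == d) c@_m *: 'X_[m]) * g.
Proof.
move=> hg; rewrite {1}(mpolyE c) mulr_suml linear_sum [RHS]mulr_suml [RHS]big_mkcond /=.
apply: eq_bigr => m _; rewrite -scalerAl linearZ /=.
have hm := trihomogM (@trihomogX m) hg.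
case: eqP => E; first by rewrite tricomp_id -?E // scalerAl.
by rewrite (tricomp_eq0 hm E) scaler0.
Qed.

End Trihomogeneous.

Section IdealMembership.
Variable K : fieldType.
Local Notation P := {mpoly K[6]}.
Implicit Types (s : seq P) (p q : P).

Lemma in_ideal0 s : in_ideal s 0.
Proof. by exists (fun _ => 0); rewrite big1 // => k _; rewrite mul0r. Qed.

Lemma in_idealD s p q : in_ideal s p -> in_ideal s q -> in_ideal s (p + q).
Proof.
move=> [c ->] [c' ->]; exists (fun k => c k + c' k).
by rewrite -big_split; apply: eq_bigr => k _; rewrite mulrDl.
Qed.

Lemma in_idealMl s r p : in_ideal s p -> in_ideal s (r * p).
Proof.
move=> [c ->]; exists (fun k => r * c k).
by rewrite mulr_sumr; apply: eq_bigr => k _; rewrite mulrA.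
Qed.

Lemma in_idealZ s c p : in_ideal s p -> in_ideal s (c *: p).
Proof. by rewrite -mul_mpolyC; apply: in_idealMl. Qed.

Lemma in_ideal_sum s I (r : seq I) (Q : pred I) (F : I -> P) :
  (forall i, Q i -> in_ideal s (F i)) -> in_ideal s (\sum_(i <- r | Q i) F i).
Proof. by move=> h; apply: big_ind => //; [apply: in_ideal0 | apply: in_idealD]. Qed.

Lemma mem_in_ideal s x : x \in s -> in_ideal s x.
Proof.
move=> xs; have hi : (index x s < size s)%N by rewrite index_mem.
exists (fun k => if (k : nat) == index x s then 1 else 0).
rewrite (bigD1 (Ordinal hi)) //= eqxx mul1r nth_index // big1 ?addr0 // => k.
by rewrite -val_eqE /= => /negbTE ->; rewrite mul0r.
Qed.

Lemma in_ideal_subset s1 s2 p : (forall x, x \in s1 -> in_ideal s2 x) ->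
  in_ideal s1 p -> in_ideal s2 p.
Proof.
by move=> h [c ->]; apply: in_ideal_sum => k _; apply/in_idealMl/h/mem_nth.
Qed.

Lemma in_ideal_pair f g p : in_ideal [:: f; g] p <-> exists a b, p = a * f + b * g.
Proof.
split=> [[c ->]|[a [b ->]]].
  by rewrite !big_ord_recl big_ord0 addr0; do 2!eexists.
exists (fun k : 'I_2 => if (k : nat) == 0%N then a else b).
by rewrite !big_ord_recr big_ord0 /= add0r.
Qed.

Lemma irredundant_gens s : (forall x, x \in s -> exists e, trihomog e x) ->
  exists s' : seq P, [/\ forall k : 'I_(size s'), exists e, trihomog e s'`_k,
     forall p, in_ideal s p <-> in_ideal s' p &
     forall k : 'I_(size s'), ~ in_ideal (take k s' ++ drop k.+1 s') s'`_k].
Proof.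
have [n] := ubnP (size s); elim: n s => // n IH s /ltnSE hs hom.
have [[k hk]|irr] :=
  classic (exists k : 'I_(size s), in_ideal (take k s ++ drop k.+1 s) s`_k); last first.
  by exists s; split=> [k||k hk] //; [apply/hom/mem_nth | apply: irr; exists k].
set s1 := take k s ++ drop k.+1 s.
have s1s x : x \in s1 -> x \in s.
  by rewrite mem_cat => /orP [/mem_take|/mem_drop].
have ss1 x : x \in s -> x \in s1 \/ x = s`_k.
  rewrite -{1}(cat_take_drop k s) (drop_nth 0) // mem_cat inE.
  by case/orP => [h|/orP [/eqP ->|h]]; [left|right|left]; rewrite // mem_cat h ?orbT.
have [|s' [hom' gen irr]] := IH s1 _ (fun x hx => hom x (s1s x hx)).
  by rewrite size_cat size_take size_drop ltn_ord; have := ltn_ord k; lia.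
exists s'; split => // p; rewrite -gen; split; apply: in_ideal_subset => x hx.
  by case: (ss1 x hx) => [/mem_in_ideal|->].
exact/mem_in_ideal/s1s.
Qed.

End IdealMembership.

Section Dimension.
Variable K : fieldType.
Local Notation P := {mpoly K[6]}.
Implicit Type S : P -> Prop.

Lemma has_freeW S n m : has_free S n -> (m <= n)%N -> has_free S m.
Proof.
move=> [v [hS hf]] le; exists (fun i : 'I_m => v (widen_ord le i)).
split=> [i|c hc i]; first exact: hS.
pose c' (j : 'I_n) := if insub (val j) is Some i then c i else 0.
suff /hf/(_ (widen_ord le i)) : \sum_(j < n) c' j *: v j = 0 by rewrite /c' /= valK.
rewrite (bigID (fun j : 'I_n => (j < m)%N)) /= big_ord_narrow [X in _ + X]big1 ?addr0.
  by rewrite -[RHS]hc; apply: eq_bigr => k _; rewrite /c' /= valK.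
by move=> j /negbTE hj; rewrite /c' insubF // scale0r.
Qed.

Lemma dimK_eq S n : has_free S n -> ~ has_free S n.+1 -> dimK S = n.
Proof.
move=> h1 h2; rewrite /dimK; case: excluded_middle_informative => [H|[]]; last by exists n.
case: (constructive_indefinite_description _ H) => m /= [hm1 hm2].
have [lt|gt|//] := ltngtP m n.
- by case: hm2; apply: has_freeW h1 _.
- by case: h2; apply: has_freeW hm1 _.
Qed.

Lemma free_in_enum S (J : finType) (v : J -> P) :
  (forall j, S (v j)) ->
  (forall c : J -> K, \sum_j c j *: v j = 0 -> forall j, c j = 0) ->
  free_in S (fun i : 'I_#|{: J}| => v (enum_val i)).
Proof.
move=> hS hf; split => [i|c hc i]; first exact: hS.
have := hf (fun j => c (enum_rank j)) _ (enum_val i); rewrite enum_valK; apply.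
rewrite -[RHS]hc (reindex (@enum_val J predT)) /=; last first.
  by exists enum_rank => x _; [exact: enum_valK | exact: enum_rankK].
by apply: eq_bigr => k _; rewrite enum_valK.
Qed.

Lemma free_in_span S n (v : 'I_n -> P) f :
  free_in S v -> ~ has_free S n.+1 -> S f ->
  exists c : 'I_n -> K, f = \sum_(i < n) c i *: v i.
Proof.
move=> [hS hf] hn hF; apply: NNPP => nspan; apply: hn.
pose w i := if unlift ord_max i is Some j then v j else f.
have wl (j : 'I_n) : w (widen_ord (leqnSn n) j) = v j.
  have -> : widen_ord (leqnSn n) j = lift ord_max j by apply: ord_inj; rewrite lift_max.
  by rewrite /w liftK.
have wm : w ord_max = f by rewrite /w unlift_none.
exists w; split => [i|c]; first by rewrite /w; case: unlift.
rewrite big_ord_recr /= wm; under eq_bigr do rewrite wl.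
have [c0 /eqP|c0 E] := eqVneq (c ord_max) 0.
  rewrite c0 scale0r addr0 => /eqP /hf h i.
  case: (unliftP ord_max i) => [j ->|->] //.
  by rewrite -(h j); congr c; apply: ord_inj; rewrite lift_max.
case: nspan; exists (fun i => - c (widen_ord (leqnSn n) i) / c ord_max).
have -> : f = - (c ord_max)^-1 *: \sum_(i < n) c (widen_ord (leqnSn n) i) *: v i.
  rewrite scaleNr -scalerN.
  have -> : - \sum_(i < n) c (widen_ord (leqnSn n) i) *: v i = c ord_max *: f.
    by apply/eqP; rewrite eq_sym -addr_eq0 addrC E.
  by rewrite scalerA mulVf // scale1r.
rewrite scaler_sumr; apply: eq_bigr => i _.
by rewrite scalerA mulrC mulNr mulrN.
Qed.

(* The coefficients of a free family on the monomials of tridegree d form a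
   matrix of full row rank with #|box d| columns. *)
Lemma has_free_trihomog_le d n : has_free (@trihomog K d) n -> (n <= #|{: box d}|)%N.
Proof.
move=> [v [hS hf]].
pose M : 'M[K]_(n, #|{: box d}|) := \matrix_(r, col) (v r)@_(box_mnm (enum_val col)).
suff /eqP <- : row_free M by apply: rank_leq_col.
rewrite -kermx_eq0; apply/eqP/row_matrixP => i; rewrite row0.
set u := row i (kermx M).
have uM : u *m M = 0 by apply/sub_kermxP; exact: row_sub.
apply/rowP => r; rewrite [RHS]mxE; move: r; apply: (hf (fun r => u 0 r)).
apply/mpolyP => m; rewrite mcoeff0 raddf_sum /=.
under eq_bigr do rewrite mcoeffZ.
have [md|md] := eqVneq (mtdeg m) d.
  have [x ->] := mtdeg_box_mnm md.
  move/matrixP: uM => /(_ 0 (enum_rank x)); rewrite !mxE => E; rewrite -[RHS]E.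
  by apply: eq_bigr => r' _; rewrite [M _ _]mxE enum_rankK.
rewrite big1 // => r' _.
suff /eqP -> : (v r')@_m == 0 by rewrite mulr0.
by rewrite mcoeff_eq0; apply: contra md => /hS ->.
Qed.

End Dimension.

Section DimensionOfSubspace.
Variable K : fieldType.
Local Notation P := {mpoly K[6]}.
Variables (S T : P -> Prop) (J : finType) (v : J -> P) (Q : pred J).
Hypothesis S_T : forall p, S p -> T p.
Hypothesis S0 : S 0.
Hypothesis S_lin : forall c p q, S p -> S q -> S (c *: p + q).
Hypothesis T_v : forall j, T (v j).
Hypothesis v_free : forall c : J -> K, \sum_j c j *: v j = 0 -> forall j, c j = 0.
Hypothesis T_bound : ~ has_free T #|{: J}|.+1.
Hypothesis S_v : forall j, Q j -> S (v j).
Hypothesis S_v_off : forall c : J -> K,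
  (forall j, Q j -> c j = 0) -> S (\sum_j c j *: v j) -> forall j, c j = 0.

Let S_sum I (r : seq I) (a : I -> K) (f : I -> P) :
  (forall i, S (f i)) -> S (\sum_(i <- r) a i *: f i).
Proof.
move=> hf; apply: big_ind => // [p q Sp Sq|i _]; last by rewrite -[_ *: _]addr0; apply: S_lin.
by rewrite -[p]scale1r; apply: S_lin.
Qed.

Let extend (A : pred J) (c : {x | A x} -> K) (x : J) : K :=
  if insub x is Some j then c j else 0.

Let sum_extend (A : pred J) (c : {x | A x} -> K) :
  \sum_j c j *: v (val j) = \sum_x extend c x *: v x.
Proof.
rewrite [RHS](bigID A) /= [X in _ = _ + X]big1 ?addr0; last first.
  by move=> x xA; rewrite /extend insubF ?scale0r //; apply/negbTE.
by rewrite [RHS]big_sub; apply: eq_bigr => j _; rewrite /extend valK.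
Qed.

Lemma dimK_basis_split : dimK S = #|Q|.
Proof.
apply: dimK_eq.
  rewrite -(card_sig Q); eexists.
  apply: (free_in_enum (v := fun j : {x | Q x} => v (val j))) => [j|c].
    exact/S_v/(valP j).
  by rewrite sum_extend => /v_free c0 j; have := c0 (val j); rewrite /extend valK.
move=> [w [Sw w_free]]; apply: T_bound.
pose u (s : 'I_#|Q|.+1 + {x | ~~ Q x}) := match s with inl i => w i | inr j => v (val j) end.
suff : has_free T #|{: 'I_#|Q|.+1 + {x | ~~ Q x}}|.
  rewrite card_sum card_ord card_sig addSn.
  by rewrite -(cardC Q) (@eq_card _ [pred x | ~~ Q x] [predC Q]).
eexists; apply: (free_in_enum (v := u)) => [[i|j]|c]; [exact/S_T/Sw | exact: T_v |].
rewrite big_sumType /= sum_extend => /eqP; rewrite addr_eq0 => /eqP E.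
have ext0 : forall x, extend (fun j => c (inr j)) x = 0.
  apply: S_v_off => [x Qx|]; first by rewrite /extend insubF ?Qx.
  rewrite -[X in S X]opprK -E -scaleN1r -[_ *: _]addr0.
  by apply: S_lin => //; apply: S_sum.
have c_inr j : c (inr j) = 0 by have := ext0 (val j); rewrite /extend valK.
move: E; rewrite [X in - X]big1 ?oppr0 => [E0|x _]; last by rewrite ext0 scale0r.
by case=> [i|j]; [apply: (w_free (fun i => c (inl i))) | apply: c_inr].
Qed.

End DimensionOfSubspace.

(** * Separating polynomials *)

Section LinearForms.
Variable K : fieldType.
Local Notation P := {mpoly K[6]}.

Definition var (h j : nat) : P := 'X_(inord (2 * h + j)).

(* The form of direction h vanishing at the point (p.1 : p.2) of P^1. *)
Definition lform (h : nat) (p : K * K) : P := p.2 *: var h 0 - p.1 *: var h 1.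

Definition det2 (p q : K * K) : K := p.2 * q.1 - p.1 * q.2.

Lemma det2xx p : det2 p p = 0.
Proof. by rewrite /det2 mulrC subrr. Qed.

Lemma det2C p q : det2 p q = - det2 q p.
Proof. by rewrite /det2; ring. Qed.

Lemma trihomog_var h j : (h < 3)%N -> (j < 2)%N -> trihomog (tri_axis h 1) (var h j).
Proof. by move=> hh hj; rewrite /var -(mtdegU hh hj); apply: trihomogX. Qed.

Lemma trihomog_lform h p : (h < 3)%N -> trihomog (tri_axis h 1) (lform h p).
Proof. by move=> hh; apply: trihomogB; apply: trihomogZ; apply: trihomog_var. Qed.

Lemma trihomog_prod_lform h n (f : nat -> K * K) :
  (h < 3)%N -> trihomog (tri_axis h n) (\prod_(0 <= u < n) lform h (f u)).
Proof.
move=> hh; elim: n => [|n IH]; first by rewrite big_geq // tri_axis0; apply: trihomog1.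
by rewrite big_nat_recr //= -tri_axisS; exact: trihomogM IH (trihomog_lform (p := f n) hh).
Qed.

End LinearForms.

Section SeparatingPolynomials.
Variable K : fieldType.
Local Notation P := {mpoly K[6]}.
Variable pt : nat -> nat -> K * K.
Hypothesis pt_indep : forall h, (h < 3)%N -> forall u w, u != w -> det2 (pt h u) (pt h w) != 0.

Definition grid_pt (y : tri) : 'I_6 -> K :=
  fun i => let q := pt (i %/ 2) (tri_nth y (i %/ 2)) in if odd i then q.2 else q.1.

Lemma meval_lform y h p : (h < 3)%N ->
  (lform h p).@[grid_pt y] = det2 p (pt h (tri_nth y h)).
Proof.
move=> hh; rewrite mevalB !mevalZ /var !mevalXU /grid_pt !inordK; try lia.
by case: h hh => [|[|[|]]].
Qed.

(* For a <= i, a form of degree i in direction h vanishing at the points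
   0, ..., a-1 of direction h but not at the point a; the remaining
   factors vanish at the unused point i+1. *)
Definition sep_form (h i a : nat) : P :=
  \prod_(0 <= u < i) lform h (pt h (if (u < a)%N then u else i.+1)).

Definition sep_poly (d x : tri) : P :=
  sep_form 0 d.1.1 x.1.1 * sep_form 1 d.1.2 x.1.2 * sep_form 2 d.2 x.2.

Lemma trihomog_sep_poly d x : trihomog d (sep_poly d x).
Proof.
case: d => [[i j] k]; rewrite -[X in trihomog X]tri_add_axes.
by apply: trihomogM; [apply: trihomogM|]; apply: trihomog_prod_lform.
Qed.

Lemma meval_sep_form y h i a : (h < 3)%N -> (sep_form h i a).@[grid_pt y] =
  \prod_(0 <= u < i) det2 (pt h (if (u < a)%N then u else i.+1)) (pt h (tri_nth y h)).
Proof. by move=> hh; rewrite rmorph_prod; apply: eq_bigr => u _; apply: meval_lform. Qed.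

Lemma sep_form_eval0 y h i a : (h < 3)%N -> (tri_nth y h < a <= i)%N ->
  (sep_form h i a).@[grid_pt y] = 0.
Proof.
move=> hh /andP [lt le]; rewrite meval_sep_form //.
rewrite (bigD1_seq (tri_nth y h)) /= ?mem_index_iota ?iota_uniq //; last by lia.
by rewrite lt det2xx mul0r.
Qed.

Lemma sep_form_eval_neq0 y h i a : (h < 3)%N -> tri_nth y h = a -> (a <= i)%N ->
  (sep_form h i a).@[grid_pt y] != 0.
Proof.
move=> hh e le; rewrite meval_sep_form // prodf_seq_neq0; apply/allP => u _ /=.
by case: ifP => lt; apply: pt_indep => //; apply/eqP; lia.
Qed.

Lemma sep_poly_eval0 d x y : tle x d -> ~~ tle x y -> (sep_poly d x).@[grid_pt y] = 0.
Proof.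
move=> /and3P [le0 le1 le2] nle; rewrite !mevalM.
have [lt0|ge0] := ltnP y.1.1 x.1.1; first by rewrite (@sep_form_eval0 _ 0) ?lt0 ?mul0r.
have [lt1|ge1] := ltnP y.1.2 x.1.2; first by rewrite (@sep_form_eval0 _ 1) ?lt1 ?mulr0 ?mul0r.
have [lt2|ge2] := ltnP y.2 x.2; first by rewrite (@sep_form_eval0 _ 2) ?lt2 ?mulr0.
by move: nle; rewrite /tle ge0 ge1 ge2.
Qed.

Lemma sep_poly_eval_neq0 d x : tle x d -> (sep_poly d x).@[grid_pt x] != 0.
Proof.
by move=> /and3P [le0 le1 le2]; rewrite !mevalM !mulf_neq0 //; apply: sep_form_eval_neq0.
Qed.

(* Induction on the weight of y: sep_poly d x vanishes at the grid point y
   unless x <= y, and does not vanish at x. *)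
Lemma sep_comb_coef_eq0 d (c : box d -> K) (S : pred (box d)) :
  (forall x y : box d, tle (box_tri x) (box_tri y) -> y \in S -> x \in S) ->
  (forall y, y \in S -> (\sum_x c x *: sep_poly d (box_tri x)).@[grid_pt (box_tri y)] = 0) ->
  forall y, y \in S -> c y = 0.
Proof.
move=> S_down S_eval0.
suff H n y : (tri_weight (box_tri y) < n)%N -> y \in S -> c y = 0.
  by move=> y; apply: (H (tri_weight (box_tri y)).+1).
elim: n y => [//|n IH] y hy yS.
have := S_eval0 y yS; rewrite raddf_sum (bigD1 y) //= big1 ?addr0.
  move=> /eqP; rewrite mevalZ mulf_eq0 => /orP [/eqP //|].
  by rewrite (negbTE (sep_poly_eval_neq0 (box_tri_le y))).
move=> x nxy; rewrite mevalZ.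
have [le|nle] := boolP (tle (box_tri x) (box_tri y)); last first.
  by rewrite sep_poly_eval0 ?mulr0 // box_tri_le.
have ne : box_tri x != box_tri y by apply: contra nxy => /eqP /box_tri_inj ->.
have lt := tri_weight_lt le ne.
by rewrite (IH x) ?mul0r //; [lia | apply: S_down yS].
Qed.

Lemma sep_poly_free d (c : box d -> K) :
  \sum_x c x *: sep_poly d (box_tri x) = 0 -> forall x, c x = 0.
Proof. by move=> hc x; apply: (@sep_comb_coef_eq0 d c predT) => // y _; rewrite hc meval0. Qed.

Lemma free_in_sep_poly d :
  free_in (@trihomog K d) (fun i : 'I_#|{: box d}| => sep_poly d (box_tri (enum_val i))).
Proof.
by apply: (free_in_enum (v := fun x : box d => sep_poly d (box_tri x))) => [x|];
  [apply: trihomog_sep_poly | apply: sep_poly_free].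
Qed.

Lemma no_free_trihomog d : ~ has_free (@trihomog K d) #|{: box d}|.+1.
Proof. by move/has_free_trihomog_le; rewrite ltnn. Qed.

Lemma dimK_trihomog d : dimK (@trihomog K d) = #|{: box d}|.
Proof. by apply: dimK_eq; [eexists; apply: free_in_sep_poly | apply: no_free_trihomog]. Qed.

Lemma sep_poly_span d (f : P) : trihomog d f ->
  exists c : box d -> K, f = \sum_x c x *: sep_poly d (box_tri x).
Proof.
move=> hf; have [c ->] := free_in_span (free_in_sep_poly d) (@no_free_trihomog d) hf.
exists (fun x => c (enum_rank x)).
rewrite (reindex (@enum_val (box d) predT)) /=; last first.
  by exists enum_rank => x _; [exact: enum_valK | exact: enum_rankK].
by apply: eq_bigr => k _; rewrite enum_valK.
Qed.

Lemma sep_form_prod_dvd h i a a' : (a' <= a <= i)%N ->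
  exists q, sep_form h i a = (\prod_(0 <= u < a') lform h (pt h u)) * q.
Proof.
move=> /andP [le1 le2]; rewrite /sep_form (big_cat_nat _ (n := a')) //=; last by lia.
exists (\prod_(a' <= u < i) lform h (pt h (if (u < a)%N then u else i.+1))); congr (_ * _).
by apply: eq_big_nat => u /andP [_ lt]; rewrite (leq_trans lt le1).
Qed.

Lemma sep_poly_split d x h1 h2 : (h1 < h2 < 3)%N -> exists r, sep_poly d x =
  sep_form h1 (tri_nth d h1) (tri_nth x h1) * sep_form h2 (tri_nth d h2) (tri_nth x h2) * r.
Proof.
rewrite /sep_poly => /andP [].
case: h2 => [|[|[|h2]]] //; case: h1 => [|[|[|h1]]] //= _ _.
- by eexists.
- by exists (sep_form 1 d.1.2 x.1.2); ring.
- by exists (sep_form 0 d.1.1 x.1.1); ring.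
Qed.

End SeparatingPolynomials.

(** * Ideals of lines indexed by a staircase *)

Definition grid_in m n (U : {set 'I_m * 'I_n}) (a b : nat) : bool :=
  [exists u : 'I_m, exists v : 'I_n, [&& u == a :> nat, v == b :> nat & (u, v) \in U]].

Section Grid.
Variables (m n : nat) (U : {set 'I_m * 'I_n}).

Lemma grid_inP a b : reflect
  (exists u v, [/\ nat_of_ord u = a, nat_of_ord v = b & (u, v) \in U]) (grid_in U a b).
Proof.
apply: (iffP existsP) => [[u /existsP [v /and3P [/eqP eu /eqP ev uv]]]|[u [v [eu ev uv]]]].
  by exists u, v.
by exists u; apply/existsP; exists v; rewrite eu ev !eqxx.
Qed.

Lemma grid_in_bound a b : grid_in U a b -> (a < m)%N /\ (b < n)%N.
Proof. by case/grid_inP => u [v [<- <- _]]. Qed.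

Lemma grid_inW a b a' b' : down_closed U ->
  grid_in U a b -> (a' <= a)%N -> (b' <= b)%N -> grid_in U a' b'.
Proof.
move=> dU /grid_inP [u [v [eu ev uv]]] la lb.
have ha : (a' < m)%N by rewrite -eu in la; apply: leq_ltn_trans la _.
have hb : (b' < n)%N by rewrite -ev in lb; apply: leq_ltn_trans lb _.
apply/grid_inP; exists (Ordinal ha), (Ordinal hb); split => //.
by apply: (dU _ _ uv) => /=; lia.
Qed.

Lemma grid_in_minn a b : grid_in U (minn a m) (minn b n) = grid_in U a b.
Proof.
apply/idP/idP => ing; have [am bn] := grid_in_bound ing; move: ing;
  by have [-> ->] : minn a m = a /\ minn b n = b by lia.
Qed.

End Grid.

Lemma lines_ideal_in_ideal (K : fieldType) m n (F : 'I_m -> {mpoly K[6]})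
    (G : 'I_n -> {mpoly K[6]}) U (s : seq {mpoly K[6]}) p :
  (forall x, x \in s -> lines_ideal F G U x) -> in_ideal s p -> lines_ideal F G U p.
Proof. by move=> hs sp u uU; apply: in_ideal_subset sp => x /hs; apply. Qed.

Section LinesIdeal.
Variable K : fieldType.
Local Notation P := {mpoly K[6]}.
Variable pt : nat -> nat -> K * K.
Hypothesis pt_indep : forall h, (h < 3)%N -> forall u w, u != w -> det2 (pt h u) (pt h w) != 0.
Variables (h1 h2 : nat).
Hypotheses (h12 : (h1 < h2)%N) (h23 : (h2 < 3)%N).
Variables (m n : nat) (F : 'I_m -> P) (G : 'I_n -> P) (U : {set 'I_m * 'I_n}).
Hypothesis F_pt : forall u, F u = lform h1 (pt h1 u).
Hypothesis G_pt : forall v, G v = lform h2 (pt h2 v).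
Hypothesis U_down : down_closed U.

Local Notation LI := (lines_ideal F G U).
Local Notation grid_pt := (grid_pt pt).
Local Notation sep_poly := (sep_poly pt).

Let h13 : (h1 < 3)%N. Proof. exact: ltn_trans h12 h23. Qed.

Lemma lines_ideal_eval0 p y :
  LI p -> grid_in U (tri_nth y h1) (tri_nth y h2) -> p.@[grid_pt y] = 0.
Proof.
move=> hp /grid_inP [u [v [eu ev uv]]].
have /in_ideal_pair [a [b ->]] := hp _ uv.
by rewrite mevalD !mevalM F_pt G_pt !meval_lform // -eu -ev !det2xx !mulr0 addr0.
Qed.

Lemma lines_ideal_tricomp e p : LI p -> LI (tricomp e p).
Proof.
move=> hp [u v] uv; have /in_ideal_pair [a [b ->]] := hp _ uv.
have hu : trihomog (tri_axis h1 1) (F u) by rewrite F_pt; apply: trihomog_lform.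
have hv : trihomog (tri_axis h2 1) (G v) by rewrite G_pt; apply: trihomog_lform.
rewrite linearD /= (tricompM_trihomog _ _ hu) (tricompM_trihomog _ _ hv).
by apply/in_ideal_pair; do 2!eexists.
Qed.

Definition corner (a b : nat) : P :=
  (\prod_(0 <= u < a) lform h1 (pt h1 u)) * (\prod_(0 <= v < b) lform h2 (pt h2 v)).

Lemma trihomog_corner a b : trihomog (tri_add (tri_axis h1 a) (tri_axis h2 b)) (corner a b).
Proof. by apply: trihomogM; apply: trihomog_prod_lform. Qed.

Lemma prod_lform_dvd h u a : (u < a)%N ->
  exists q, \prod_(0 <= w < a) lform h (pt h w) = lform h (pt h u) * q.
Proof. by move=> ua; rewrite (bigD1_seq u) /= ?mem_index_iota ?iota_uniq //; eexists. Qed.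

Lemma corner_lines_ideal a b : ~~ grid_in U a b -> LI (corner a b).
Proof.
move=> nab [u v] uv /=; rewrite /corner.
have [ua|au] := ltnP u a.
  have [q ->] := prod_lform_dvd h1 ua; apply/in_ideal_pair.
  by exists (q * \prod_(0 <= v < b) lform h2 (pt h2 v)), 0; rewrite F_pt mul0r addr0; ring.
have [vb|bv] := ltnP v b.
  have [q ->] := prod_lform_dvd h2 vb; apply/in_ideal_pair.
  by exists 0, (q * \prod_(0 <= u < a) lform h1 (pt h1 u)); rewrite G_pt mul0r add0r; ring.
by case/negP: nab; apply: grid_inW au bv => //; apply/grid_inP; exists u, v.
Qed.

Lemma corner_eval_neq0 a b :
  (corner a b).@[grid_pt (tri_add (tri_axis h1 a) (tri_axis h2 b))] != 0.
Proof.
have n12 : h1 != h2 by rewrite neq_ltn h12.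
rewrite /corner mevalM !rmorph_prod mulf_neq0 // prodf_seq_neq0; apply/allP => u;
  rewrite mem_index_iota => /andP [_ lt] /=;
  rewrite meval_lform // tri_nth_add !tri_nth_axis // eqxx.
- by rewrite (eq_sym h2) (negbTE n12) addn0 pt_indep // neq_ltn lt.
- by rewrite (negbTE n12) add0n pt_indep // neq_ltn lt.
Qed.

Lemma sep_poly_corner_dvd d x a b : (a <= tri_nth x h1)%N -> (b <= tri_nth x h2)%N ->
  tle x d -> exists r, sep_poly d x = corner a b * r.
Proof.
move=> la lb le; have [r0 ->] := sep_poly_split pt d x (introT andP (conj h12 h23)).
have [q1 ->] := sep_form_prod_dvd pt h1 (introT andP (conj la (tle_nth h1 le))).
have [q2 ->] := sep_form_prod_dvd pt h2 (introT andP (conj lb (tle_nth h2 le))).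
by exists (q1 * q2 * r0); rewrite /corner; ring.
Qed.

Lemma sep_poly_lines_ideal d x :
  ~~ grid_in U (tri_nth x h1) (tri_nth x h2) -> tle x d -> LI (sep_poly d x).
Proof.
move=> nx le; have [r ->] := sep_poly_corner_dvd (leqnn _) (leqnn _) le.
by move=> u uU; rewrite mulrC; apply/in_idealMl/corner_lines_ideal.
Qed.

Definition corners : seq P :=
  [seq corner ab.1 ab.2 | ab <- [seq (a, b) | a <- iota 0 m.+1, b <- iota 0 n.+1]
                        & ~~ grid_in U ab.1 ab.2].

Lemma mem_corners a b : ~~ grid_in U a b -> corner (minn a m) (minn b n) \in corners.
Proof.
rewrite -grid_in_minn => nab.
apply: (map_f (fun ab => corner ab.1 ab.2) (x := (minn a m, minn b n))).
rewrite mem_filter nab; apply/allpairsPdep; exists (minn a m), (minn b n).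
by rewrite !mem_iota !add0n !ltnS !geq_minr.
Qed.

Lemma corners_lines_ideal x : x \in corners -> LI x.
Proof. by case/mapP => ab; rewrite mem_filter => /andP [nab _] ->; apply: corner_lines_ideal. Qed.

(* A trihomogeneous element of the ideal is a combination of separating
   polynomials; those indexed by grid points of U have zero coefficient, and
   the others are multiples of corners. *)
Lemma trihomog_in_corners e q : trihomog e q -> LI q -> in_ideal corners q.
Proof.
move=> hq lq; have [c E] := sep_poly_span pt_indep hq; rewrite E in lq *.
pose S := [pred y : box e | grid_in U (tri_nth (box_tri y) h1) (tri_nth (box_tri y) h2)].
have c0 : forall y, y \in S -> c y = 0.
  apply: (sep_comb_coef_eq0 pt_indep) => [x y le|y yS]; last exact: lines_ideal_eval0.
  by rewrite !inE => /grid_inW; apply; rewrite // tle_nth.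
apply: in_ideal_sum => x _.
have [xS|xS] := boolP (x \in S); first by rewrite c0 // scale0r; apply: in_ideal0.
have [r ->] := sep_poly_corner_dvd (geq_minl _ m) (geq_minl _ n) (box_tri_le x).
by apply/in_idealZ; rewrite mulrC; apply/in_idealMl/mem_in_ideal/mem_corners.
Qed.

Lemma lines_idealE p : LI p <-> in_ideal corners p.
Proof.
split=> [lp|]; last exact/lines_ideal_in_ideal/corners_lines_ideal.
rewrite (sum_tricomp p); apply: in_ideal_sum => e _.
apply: (trihomog_in_corners (@trihomog_tricomp K e p)); exact: lines_ideal_tricomp.
Qed.

(* A trihomogeneous element of the ideal whose degree lies on the grid of U
   vanishes at all grid points below its degree, hence is zero. *)
Lemma min_gen_deg_notin e : min_gen_deg LI e -> ~~ grid_in U (tri_nth e h1) (tri_nth e h2).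
Proof.
move=> [s [_ gen irr [k hk]]]; apply/negP => ine.
have Lk : LI s`_k by apply/gen/mem_in_ideal/mem_nth.
have [c E] := sep_poly_span pt_indep hk.
have c0 y : c y = 0.
  apply: (sep_comb_coef_eq0 pt_indep (S := predT)) => // y' _.
  rewrite -E; apply: lines_ideal_eval0 => //.
  by apply: grid_inW ine _ _; rewrite // tle_nth ?box_tri_le.
by apply: (irr k); rewrite E big1 => [|x _]; [apply: in_ideal0 | rewrite c0 scale0r].
Qed.

(* The corner of tridegree d' lies in the ideal and does not vanish at
   grid_pt d', so its d'-component with respect to an irredundant subsystem
   of the corners is nonzero: some generator has tridegree below d'. *)
Lemma min_gen_deg_below a b : ~~ grid_in U a b ->
  exists e, min_gen_deg LI e /\ tle e (tri_add (tri_axis h1 a) (tri_axis h2 b)).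
Proof.
move=> nab; pose d' := tri_add (tri_axis h1 (minn a m)) (tri_axis h2 (minn b n)).
have [|s [hom gen irr]] := @irredundant_gens K corners.
  by move=> x /mapP [ab _ ->]; eexists; apply: trihomog_corner.
have [k [e [he le]]] : exists k : 'I_(size s), exists e, trihomog e s`_k /\ tle e d'.
  apply: NNPP => none.
  have [c Ec] : in_ideal s (corner (minn a m) (minn b n)).
    by apply/gen/mem_in_ideal/mem_corners.
  suff : corner (minn a m) (minn b n) = 0.
    by move/(congr1 (meval (grid_pt d'))); rewrite meval0; apply/eqP/corner_eval_neq0.
  rewrite -(tricomp_id (@trihomog_corner (minn a m) (minn b n))) Ec linear_sum big1 // => k _ /=.
  have [e he] := hom k.
  rewrite (tricompM_trihomog _ _ he) big_pred0 ?mul0r // => mm; apply/negP => /eqP E.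
  by apply: none; exists k, e; split => //; rewrite /d' -E; apply: tle_addl.
exists e; split; first by exists s; split => // [p|]; [rewrite lines_idealE | exists k].
apply: tle_trans le _; apply/tleP => h hh.
rewrite !tri_nth_add !tri_nth_axis ?(ltn_trans h12) //.
by apply: leq_add; case: ifP => // _; apply: geq_minl.
Qed.

End LinesIdeal.

(** * Points of the hyperplanes *)

Section PointsOfLinearForms.
Variable K : fieldType.
Local Notation P := {mpoly K[6]}.

Definition form_pt (h : nat) (f : P) : K * K :=
  (- f@_U_(inord (2 * h + 1)), f@_U_(inord (2 * h))).

Lemma lin_form_pt (h : 'I_3) f :
  lin_form h f -> f = lform h (form_pt h f) /\ form_pt h f != (0, 0).
Proof.
move=> [c0 [c1 [nz ->]]].
have hh := ltn_ord h.
have -> : form_pt h (c0 *: xvar K h ord0 + c1 *: xvar K h ord_max) = (- c1, c0).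
  rewrite /form_pt /xvar !mcoeffD !mcoeffZ !mcoeffXU -!val_eqE /= !inordK; try lia.
  have -> : (2 * h + 0 == 2 * h + 1)%N = false by lia.
  have -> : (2 * h + 1 == 2 * h)%N = false by lia.
  by rewrite addn0 !eqxx /= !mulr1 !mulr0 addr0 add0r.
rewrite /lform /= scaleNr opprK xpair_eqE oppr_eq0 negb_and; split => //.
by case: nz => ->; rewrite ?orbT.
Qed.

Lemma lform_proportional h (p q : K * K) : q != (0, 0) -> det2 p q = 0 ->
  exists c, lform h p = c *: lform h q.
Proof.
case: p q => [p1 p2] [q1 q2] nq /eqP; rewrite /det2 /= subr_eq0 => /eqP E.
suff [c [-> ->]] : exists c, p1 = c * q1 /\ p2 = c * q2.
  by exists c; rewrite /lform /= scalerBr !scalerA.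
have [q10|q1n0] := eqVneq q1 0; last by exists (p1 / q1); rewrite divfK // mulrAC -E mulfK.
have q2n0 : q2 != 0 by apply: contraNneq nq => q20; rewrite q10 q20.
exists (p2 / q2); rewrite divfK // q10 mulr0; split => //.
by apply/eqP; move: E; rewrite q10 mulr0 => /esym/eqP; rewrite mulf_eq0 (negbTE q2n0) orbF.
Qed.

Lemma det2_neq0_line (p : K * K) k : p != (0, 0) -> k != p.2 / p.1 -> det2 p (1, k) != 0.
Proof.
case: p => [p1 p2] nz nk; rewrite /det2 /= mulr1.
have [p10|p1n0] := eqVneq p1 0.
  by rewrite p10 mul0r subr0; apply: contraNneq nz => p20; rewrite p10 p20.
by apply: contra nk; rewrite subr_eq0 => /eqP ->; rewrite mulrC mulKf.
Qed.

Hypothesis K_pchar0 : [pchar K] =i pred0.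

Lemma natr_inj_pchar0 (a b : nat) : (a%:R : K) = b%:R -> a = b.
Proof.
wlog le_ab : a b / (a <= b)%N.
  by move=> W; case/orP: (leq_total a b) => /W // h /esym /h.
move=> E; apply/eqP; rewrite eqn_leq le_ab /= -subn_eq0.
by rewrite -((pcharf0P K).1 K_pchar0) natrB // E subrr.
Qed.

Lemma exists_natr_notin (s : seq K) : exists N0, forall k, (N0 <= k)%N -> (k%:R : K) \notin s.
Proof.
elim: s => [|x s [N0 IH]]; first by exists 0%N.
have [[j <-]|nj] := classic (exists j, (j%:R : K) = x).
  exists (maxn N0 j.+1) => k hk; rewrite inE negb_or IH ?andbT; last by lia.
  by apply/eqP => /natr_inj_pchar0 E; move: hk; rewrite E; lia.
exists N0 => k hk; rewrite inE negb_or IH // andbT.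
by apply/eqP => E; apply: nj; exists k.
Qed.

(* Linear forms defining distinct hyperplanes vanish at pairwise distinct
   points; in characteristic zero infinitely many further points (1 : k),
   k a large integer, can be added. *)
Lemma points_of_lin_forms (h : 'I_3) m (F : 'I_m -> P) :
  (forall u, lin_form h (F u)) ->
  (forall u u', u != u' -> ~ exists c : K, F u = c *: F u') ->
  exists q : nat -> K * K, (forall u w, u != w -> det2 (q u) (q w) != 0) /\
     forall u : 'I_m, F u = lform h (q u).
Proof.
move=> lin dis; pose p u := form_pt h (F u).
have [N0 hN] := exists_natr_notin [seq (p u).2 / (p u).1 | u <- enum 'I_m].
pose q (u : nat) := if insub u is Some u' then p u' else (1, (N0 + u)%N%:R).
have qE (u : 'I_m) : q u = p u by rewrite /q valK.
have qF (w : nat) : (m <= w)%N -> q w = (1, (N0 + w)%N%:R).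
  by move=> hw; rewrite /q insubF // ltnNge hw.
exists q; split => [|u]; last by rewrite qE; case: (lin_form_pt (lin u)).
have old_new (u : 'I_m) w : (m <= w)%N -> det2 (q u) (q w) != 0.
  move=> hw; rewrite qE qF //; apply: det2_neq0_line; first by case: (lin_form_pt (lin u)).
  by apply: contraNneq (hN _ (leq_addr w N0)) => ->; apply: map_f; rewrite mem_enum.
move=> u w nuw; have [hu|hu] := ltnP u m; have [hw|hw] := ltnP w m.
- have nuw' : Ordinal hu != Ordinal hw by rewrite -val_eqE.
  have [Fu _] := lin_form_pt (lin (Ordinal hu)).
  have [Fw nz_w] := lin_form_pt (lin (Ordinal hw)).
  rewrite -[u]/(val (Ordinal hu)) -[w]/(val (Ordinal hw)) !qE.
  apply/eqP => /(lform_proportional h nz_w) [c E].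
  by apply: (dis _ _ nuw'); exists c; rewrite Fu Fw.
- exact: (old_new (Ordinal hu)).
- by rewrite det2C oppr_eq0; exact: (old_new (Ordinal hw)).
- rewrite !qF // /det2 /= !mul1r mulr1 subr_eq0.
  by apply/eqP => /natr_inj_pchar0; apply/eqP; rewrite eqn_add2l.
Qed.

End PointsOfLinearForms.

(** * The Hilbert function of a Ferrers variety of lines *)

Definition gsum (f : nat -> nat -> nat -> int) (A B C : nat) : int :=
  \sum_(0 <= a < A) \sum_(0 <= b < B) \sum_(0 <= c < C) f a b c.

Lemma gsum0 f A B C : [\/ A = 0, B = 0 | C = 0]%N -> gsum f A B C = 0.
Proof.
case=> ->; rewrite /gsum; first by rewrite big_geq.
  by rewrite big1 // => a _; rewrite big_geq.
by rewrite big1 // => a _; rewrite big1 // => b _; rewrite big_geq.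
Qed.

Lemma gsum_diff3 f i j k :
  gsum f i.+1 j.+1 k.+1 - gsum f i j.+1 k.+1 - gsum f i.+1 j k.+1 - gsum f i.+1 j.+1 k
  + gsum f i j k.+1 + gsum f i j.+1 k + gsum f i.+1 j k - gsum f i j k = f i j k.
Proof.
pose s2 B C := \sum_(0 <= b < B) \sum_(0 <= c < C) f i b c.
pose s1 C := \sum_(0 <= c < C) f i j c.
have gS B C : gsum f i.+1 B C = gsum f i B C + s2 B C by rewrite /gsum big_nat_recr.
have s2S C : s2 j.+1 C = s2 j C + s1 C by rewrite /s2 big_nat_recr.
have s1S : s1 k.+1 = s1 k + f i j k by rewrite /s1 big_nat_recr.
by rewrite !gS !s2S s1S; ring.
Qed.

Lemma card_box_gsum d (Q : pred tri) :
  (#|[pred x : box d | Q (box_tri x)]| : int) =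
  gsum (fun a b c => (Q (a, b, c) : nat)%:Z) d.1.1.+1 d.1.2.+1 d.2.+1.
Proof.
rewrite /gsum big_mkord.
under eq_bigr do rewrite big_mkord; under eq_bigr do under eq_bigr do rewrite big_mkord.
rewrite !pair_bigA -sum1_card big_mkcond /= (big_morph Posz PoszD (erefl 0%:Z)).
by apply: eq_bigr => x _; rewrite inE /box_tri; case: (Q _).
Qed.

Lemma DeltaH_gsum (K : fieldType) (I : {mpoly K[6]} -> Prop) f d :
  (forall e, hilb I e = gsum f e.1.1.+1 e.1.2.+1 e.2.+1) -> DeltaH I d = f d.1.1 d.1.2 d.2.
Proof.
move=> hI; have hsh l m n : (l <= 1)%N -> (m <= 1)%N -> (n <= 1)%N ->
    hilb_sh I d l m n = gsum f (d.1.1.+1 - l) (d.1.2.+1 - m) (d.2.+1 - n).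
  rewrite /hilb_sh; case: ifP => [/and3P [? ? ?]|/negbT]; first by rewrite hI /= !subSn.
  rewrite !negb_and -!ltnNge => /or3P lt hl hm hn; rewrite gsum0 //.
  by case: lt => ?; [apply: Or31 | apply: Or32 | apply: Or33]; lia.
rewrite /DeltaH !big_ord_recr !big_ord0 /= !add0r !hsh // !subn0 !subn1 /=.
by rewrite -(gsum_diff3 f); ring.
Qed.

(* The grid point grid_pt x lies on no line of X. *)
Definition off_lines m1 m2 m3 (U3 : {set 'I_m1 * 'I_m2}) (U2 : {set 'I_m1 * 'I_m3})
    (U1 : {set 'I_m2 * 'I_m3}) (x : tri) : bool :=
  [&& ~~ grid_in U3 (tri_nth x 0) (tri_nth x 1), ~~ grid_in U2 (tri_nth x 0) (tri_nth x 2)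
    & ~~ grid_in U1 (tri_nth x 1) (tri_nth x 2)].

Section VarietyOfLines.
Variable K : fieldType.
Local Notation P := {mpoly K[6]}.
Variable pt : nat -> nat -> K * K.
Hypothesis pt_indep : forall h, (h < 3)%N -> forall u w, u != w -> det2 (pt h u) (pt h w) != 0.
Variables (d1 d2 d3 : nat) (A : 'I_d1 -> P) (B : 'I_d2 -> P) (C : 'I_d3 -> P).
Variables (U3 : {set 'I_d1 * 'I_d2}) (U2 : {set 'I_d1 * 'I_d3}) (U1 : {set 'I_d2 * 'I_d3}).
Hypothesis A_pt : forall u, A u = lform 0 (pt 0 u).
Hypothesis B_pt : forall u, B u = lform 1 (pt 1 u).
Hypothesis C_pt : forall u, C u = lform 2 (pt 2 u).
Hypotheses (U3_down : down_closed U3) (U2_down : down_closed U2) (U1_down : down_closed U1).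

Definition X_ideal (p : P) :=
  [/\ lines_ideal A B U3 p, lines_ideal A C U2 p & lines_ideal B C U1 p].

Local Notation off := (off_lines U3 U2 U1).

Lemma off_linesW x y : tle x y -> off x -> off y.
Proof.
move=> le /and3P [n3 n2 n1]; apply/and3P; split;
  [move: n3 | move: n2 | move: n1]; apply: contra => /grid_inW; apply; rewrite ?tle_nth //.
Qed.

Lemma X_ideal_eval0 p y : X_ideal p -> ~~ off y -> p.@[grid_pt pt y] = 0.
Proof.
move=> [l3 l2 l1]; rewrite !negb_and !negbK => /or3P [i|i|i].
- exact: (lines_ideal_eval0 (isT : (0 < 1)%N) (isT : (1 < 3)%N) A_pt B_pt l3 i).
- exact: (lines_ideal_eval0 (isT : (0 < 2)%N) (isT : (2 < 3)%N) A_pt C_pt l2 i).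
- exact: (lines_ideal_eval0 (isT : (1 < 2)%N) (isT : (2 < 3)%N) B_pt C_pt l1 i).
Qed.

Lemma sep_poly_X_ideal d x : off x -> tle x d -> X_ideal (sep_poly pt d x).
Proof.
move=> /and3P [n3 n2 n1] le; split.
- exact: (sep_poly_lines_ideal (isT : (0 < 1)%N) (isT : (1 < 3)%N) A_pt B_pt U3_down n3 le).
- exact: (sep_poly_lines_ideal (isT : (0 < 2)%N) (isT : (2 < 3)%N) A_pt C_pt U2_down n2 le).
- exact: (sep_poly_lines_ideal (isT : (1 < 2)%N) (isT : (2 < 3)%N) B_pt C_pt U1_down n1 le).
Qed.

Lemma X_ideal_lin c p q : X_ideal p -> X_ideal q -> X_ideal (c *: p + q).
Proof.
by move=> [? ? ?] [? ? ?]; split=> u uU; apply: in_idealD; try apply: in_idealZ; auto.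
Qed.

Lemma dimK_X_ideal d :
  dimK (fun p => trihomog d p /\ X_ideal p) = #|[pred x : box d | off (box_tri x)]|.
Proof.
apply: (dimK_basis_split (T := trihomog d) (v := fun x => sep_poly pt d (box_tri x))).
- by move=> p [].
- by split; [apply: trihomog0 | split=> u _; apply: in_ideal0].
- by move=> c p q [hp Ip] [hq Iq]; split; [apply/trihomogD/hq/trihomogZ | apply: X_ideal_lin].
- by move=> x; apply: trihomog_sep_poly.
- exact: sep_poly_free.
- exact: no_free_trihomog.
- by move=> x offx; split; [apply: trihomog_sep_poly | apply/sep_poly_X_ideal/box_tri_le].
move=> c c_off [_ Ic] y; have [offy|offy] := boolP (off (box_tri y)); first exact: c_off.
apply: (sep_comb_coef_eq0 pt_indep (S := [pred y | ~~ off (box_tri y)])) offy.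
  by move=> x z le; rewrite !inE; apply: contra; apply: off_linesW.
by move=> z offz; apply: X_ideal_eval0.
Qed.

Lemma DeltaH_X_ideal d : DeltaH X_ideal d = (~~ off d : nat)%:Z.
Proof.
rewrite (DeltaH_gsum (f := fun a b c => (~~ off (a, b, c) : nat)%:Z)) => [|e].
  by case: d => [[]].
rewrite /hilb (dimK_trihomog pt_indep) dimK_X_ideal -(card_box_gsum e (fun x => ~~ off x)).
rewrite -(cardC [pred x : box e | off (box_tri x)]) PoszD addrAC subrr add0r.
by congr Posz; apply: eq_card.
Qed.

Local Notation hatD := (minimal_elts (DX (min_gen_deg (lines_ideal A B U3))
  (min_gen_deg (lines_ideal A C U2)) (min_gen_deg (lines_ideal B C U1)))).

Lemma hatD_below_iff d : (exists e, hatD e /\ tle e d) <-> off d.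
Proof.
split=> [[e [[[a3 [b3 [a2 [c2 [b1 [c1 [D3 D2 D1 ->]]]]]]] _] le]]|].
  have n3 := min_gen_deg_notin pt_indep (isT : (0 < 1)%N) (isT : (1 < 3)%N) A_pt B_pt U3_down D3.
  have n2 := min_gen_deg_notin pt_indep (isT : (0 < 2)%N) (isT : (2 < 3)%N) A_pt C_pt U2_down D2.
  have n1 := min_gen_deg_notin pt_indep (isT : (1 < 2)%N) (isT : (2 < 3)%N) B_pt C_pt U1_down D1.
  apply: off_linesW le _; apply/and3P; split;
    [move: n3 | move: n2 | move: n1]; apply: contra => /grid_inW; apply => //=; lia.
case/and3P => n3 n2 n1.
have [[[a3 b3] z3] [D3 le3]] :=
  min_gen_deg_below pt_indep (isT : (0 < 1)%N) (isT : (1 < 3)%N) A_pt B_pt U3_down n3.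
have [[[a2 z2] c2] [D2 le2]] :=
  min_gen_deg_below pt_indep (isT : (0 < 2)%N) (isT : (2 < 3)%N) A_pt C_pt U2_down n2.
have [[[z1 b1] c1] [D1 le1]] :=
  min_gen_deg_below pt_indep (isT : (1 < 2)%N) (isT : (2 < 3)%N) B_pt C_pt U1_down n1.
move: le3 le2 le1; rewrite /tle /= !addn0 !add0n.
move=> /and3P [la3 lb3 hz3] /and3P [la2 hz2 lc2] /and3P [hz1 lb1 lc1].
move: hz3 hz2 hz1 D3 D2 D1; rewrite !leqn0 => /eqP-> /eqP-> /eqP-> D3 D2 D1.
have [e [min_e le]] : exists e, hatD e /\ tle e (maxn a3 a2, maxn b3 b1, maxn c1 c2).
  by apply: minimal_elts_below; exists a3, b3, a2, c2, b1, c1.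
by exists e; split => //; apply: tle_trans le _; rewrite /tle /= !geq_max; lia.
Qed.

End VarietyOfLines.

Lemma points_of_lines (K : fieldType) d1 d2 d3 (A : 'I_d1 -> {mpoly K[6]})
    (B : 'I_d2 -> {mpoly K[6]}) (C : 'I_d3 -> {mpoly K[6]}) U3 U2 U1 :
  [pchar K] =i pred0 -> var_of_lines A B C U3 U2 U1 ->
  exists pt : nat -> nat -> K * K,
    [/\ forall h, (h < 3)%N -> forall u w, u != w -> det2 (pt h u) (pt h w) != 0,
        forall u, A u = lform 0 (pt 0 u), forall u, B u = lform 1 (pt 1 u)
      & forall u, C u = lform 2 (pt 2 u)].
Proof.
move=> K0 [[lA [lB lC]] [dA [dB dC]] _].
have [qa [qa_indep qaE]] := points_of_lin_forms K0 lA dA.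
have [qb [qb_indep qbE]] := points_of_lin_forms K0 lB dB.
have [qc [qc_indep qcE]] := points_of_lin_forms K0 lC dC.
by exists (fun h => if h == 0%N then qa else if h == 1%N then qb else qc);
  split => // -[|[|[|]]].
Qed.

Theorem corollary4p4 (K : closedFieldType) (d1 d2 d3 : nat)
  (A : 'I_d1 -> {mpoly K[6]}) (B : 'I_d2 -> {mpoly K[6]})
  (C : 'I_d3 -> {mpoly K[6]})
  (U3 : {set 'I_d1 * 'I_d2}) (U2 : {set 'I_d1 * 'I_d3})
  (U1 : {set 'I_d2 * 'I_d3}) :
  [pchar K] =i pred0 ->
  var_of_lines A B C U3 U2 U1 ->
  down_closed U3 -> down_closed U2 -> down_closed U1 ->
  let IX := fun p => [/\ lines_ideal A B U3 p, lines_ideal A C U2 p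
                       & lines_ideal B C U1 p] in
  let hatD := minimal_elts (DX (min_gen_deg (lines_ideal A B U3))
                               (min_gen_deg (lines_ideal A C U2))
                               (min_gen_deg (lines_ideal B C U1))) in
  forall d : tri,
    ((exists e, hatD e /\ tle e d) -> DeltaH IX d = 0) /\
    (~ (exists e, hatD e /\ tle e d) -> DeltaH IX d = 1).
Proof.
move=> K0 lines dU3 dU2 dU1 IX hatD d.
have [pt [pt_indep A_pt B_pt C_pt]] := points_of_lines K0 lines.
have -> : DeltaH IX d = (~~ off_lines U3 U2 U1 d : nat)%:Z.
  exact: (DeltaH_X_ideal pt_indep A_pt B_pt C_pt dU3 dU2 dU1).
have below := hatD_below_iff pt_indep A_pt B_pt C_pt dU3 dU2 dU1 d.
by split=> [/below -> // | nbelow]; case: (boolP (off_lines _ _ _ d)) => // /below.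
Qed.
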